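(* Let $\pi=\pi_1\pi_2\cdots\pi_n$ be a signed permutation on $\{0,1,\dots,n-1\}$, and let $X$ and $f:X\to X-1$ be the signed set on $[n]$ and bijection determined by $\pi$ (i.e. $\pi$ is the representation of $f$). If there is an index $i$ such that $\pi_i$ is a signed fixed point (i.e. $\pi_i=i$ or $\pi_i=\bar i$) and the entry $\pi_i$ and the entry of $\pi$ with underlying value $i-1$ have the same sign (both barred or both unbarred), then $f$ has a fixed point.
   Context: A signed permutation on a set $S$ of integers is an arrangement of the elements of $S$ in which some entries carry a bar; a bar is regarded as a sign. A signed set on $[n]=\{1,\dots,n\}$ is $[n]$ with some elements barred. For a signed set $X$ on $[n]$, $X-1$ is obtained by subtracting $1$ from each element using the rule $\bar i-1=\overline{i-1}$; conversely addition uses $\bar i+1=\overline{i+1}$. Bijections $f:X\to X-1$ (over all signed sets $X$ on $[n]$) correspond bijectively to signed permutations $\pi=\pi_1\cdots\pi_n$ of $\{0,1,\dots,n-1\}$ as follows: list $X=\{\sigma_1,\dots,\sigma_n\}$ with $\sigma_i$ having underlying value $i$, and set $\pi_i=f(\sigma_i)$; conversely the entries of $\pi$ form the signed set $X-1$, which determines $X=(X-1)+1$ and hence $f$. This $\pi$ is called the representation of $f$. A fixed point of $f$ is an $x\in X$ with $f(x)=x$ as signed elements. *)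

From mathcomp Require Import all_boot.
Set Implicit Arguments. Unset Strict Implicit. Unset Printing Implicit Defensive.

(* A signed element is a pair (underlying value, barred?) ; true = barred. *)
Definition selt := (nat * bool)%type.

(* A signed set X on [n] = {1..n} is given by a sign function s : nat -> bool
   (only the values s 1, ..., s n matter): X = { (i, s i) | 1 <= i <= n }. *)
Definition inX (n : nat) (s : nat -> bool) (x : selt) : bool :=
  (0 < x.1 <= n) && (x.2 == s x.1).

(* X - 1 = { (i-1, s i) | 1 <= i <= n } = { (j, s (j+1)) | 0 <= j < n }. *)
Definition inXm1 (n : nat) (s : nat -> bool) (y : selt) : bool :=
  (y.1 < n) && (y.2 == s y.1.+1).

Definition bij_X_Xm1 (n : nat) (s : nat -> bool) (f : selt -> selt) : Prop :=
  [/\ forall x, inX n s x -> inXm1 n s (f x),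
      forall x y, inX n s x -> inX n s y -> f x = f y -> x = y
    & forall y, inXm1 n s y -> exists2 x, inX n s x & f x = y].

(* A signed permutation pi = pi_1 ... pi_n of {0,...,n-1}
   (pi_i is  nth (0,false) pi i.-1). *)
Definition signed_perm (n : nat) (pi : seq selt) : Prop :=
  size pi = n /\ perm_eq (map fst pi) (iota 0 n).

Definition entry (pi : seq selt) (i : nat) : selt := nth (0, false) pi i.-1.

Definition represents (n : nat) (s : nat -> bool) (f : selt -> selt)
  (pi : seq selt) : Prop :=
  forall i, 0 < i <= n -> entry pi i = f (i, s i).

Definition has_fixed_point (n : nat) (s : nat -> bool) (f : selt -> selt) : Prop :=
  exists2 x, inX n s x & f x = x.

From mathcomp Require Import all_boot.

Set Implicit Arguments.
Unset Strict Implicit.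

(* An entry of value [i - 1] lies in [X - 1], so its sign is the sign [s i] of
   [i] in [X]; the entry [pi_i] shares that sign and has value [i], hence equals
   [sigma_i = (i, s i)], which [f] therefore fixes. *)

Lemma inX_sigma (n : nat) (s : nat -> bool) (i : nat) :
  0 < i <= n -> inX n s (i, s i).
Proof. by move=> Hi; rewrite /inX /= Hi eqxx. Qed.

Lemma inXm1_sign (n : nat) (s : nat -> bool) (y : selt) :
  inXm1 n s y -> y.2 = s y.1.+1.
Proof. by case/andP=> _ /eqP. Qed.

Lemma entry_sign (n : nat) (s : nat -> bool) (f : selt -> selt)
    (pi : seq selt) (j : nat) :
  (forall x, inX n s x -> inXm1 n s (f x)) -> represents n s f pi ->
  0 < j <= n -> (entry pi j).2 = s (entry pi j).1.+1.
Proof. by move=> fX rep Hj; rewrite rep //; apply/inXm1_sign/fX/inX_sigma. Qed.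

Lemma fixed_point_of_entry (n : nat) (s : nat -> bool) (f : selt -> selt)
    (pi : seq selt) (i : nat) :
  represents n s f pi -> 0 < i <= n -> entry pi i = (i, s i) ->
  has_fixed_point n s f.
Proof. by move=> rep Hi Ei; exists (i, s i); rewrite ?inX_sigma // -rep. Qed.

Theorem lemma1 (n : nat) (pi : seq selt) (s : nat -> bool) (f : selt -> selt) :
  signed_perm n pi ->
  bij_X_Xm1 n s f ->
  represents n s f pi ->
  (exists i, [/\ 0 < i <= n, (entry pi i).1 = i &
      exists j, [/\ 0 < j <= n, (entry pi j).1 = i.-1 &
                    (entry pi j).2 = (entry pi i).2]]) ->
  has_fixed_point n s f.
Proof.
move=> _ [fX _ _] rep [i [Hi Ei [j [Hj Ej Sj]]]].
have i_gt0 : 0 < i by case/andP: Hi.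
have sign_i : (entry pi i).2 = s i.
  by rewrite -Sj (entry_sign fX rep Hj) Ej prednK.
apply: (fixed_point_of_entry rep Hi).
by case: (entry pi i) Ei sign_i => a b /= -> ->.
Qed.
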